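(* Let $G$ be a connected graph with a fixed vertex $v_1$. Take a new vertex $z\notin V(G)$ and join it by a single edge to a vertex $u \in V(G)$ with $u \neq v_1$; denote the resulting graph by $G^+$. Then $\delta_{G^+}(z) = \delta_{G^+}(u)+1 = \delta_G(u)+1$.
   Context: All graphs are finite, simple, undirected. For a graph $H$ and vertex $x$, the transmission is $t_H(x)=\sum_{y\in V(H)}\mathrm{dist}_H(x,y)$. For a graph $H$ containing the fixed vertex $v_1$ and a vertex $x\neq v_1$ of $H$, define $\delta_H(x) = t_H(x) - t_{H-v_1}(x)$, where $H-v_1$ denotes $H$ with $v_1$ and its incident edges deleted. *)

From mathcomp Require Import all_boot all_order all_algebra.
Set Implicit Arguments. Unset Strict Implicit. Unset Printing Implicit Defensive.

(* A (simple, undirected) graph is represented inside an ambient finite type T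
   by a vertex set V : {set T} and a symmetric irreflexive relation e : rel T;
   its edges are the pairs x y with x, y in V and e x y. *)

Section Graphs.
Variable T : finType.

Definition grow (V : {set T}) (e : rel T) (A : {set T}) : {set T} :=
  A :|: [set y in V | [exists x in A, e x y]].

Fixpoint ball (V : {set T}) (e : rel T) (x : T) (n : nat) : {set T} :=
  match n with
  | 0 => V :&: [set x]
  | n'.+1 => grow V e (ball V e x n')
  end.

Definition connected (V : {set T}) (e : rel T) : Prop :=
  forall x y, x \in V -> y \in V -> exists n, y \in ball V e x n.

(* graph distance: least n with y within n steps of x
   (a walk between vertices of V can be shortened to length < #|T|;
    the value for unreachable y is irrelevant for connected graphs) *)
Definition dist (V : {set T}) (e : rel T) (x y : T) : nat :=
  find (fun n => y \in ball V e x n) (iota 0 #|T|.+1).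

Definition transmission (V : {set T}) (e : rel T) (x : T) : nat :=
  \sum_(y in V) dist V e x y.

Definition delta (V : {set T}) (e : rel T) (v1 x : T) : int :=
  (transmission V e x)%:Z - (transmission (V :\ v1) e x)%:Z.

Definition pendant_edge (V : {set T}) (e : rel T) (z u : T) : rel T :=
  fun x y => [&& e x y, x \in V & y \in V]
             || ((x == z) && (y == u)) || ((x == u) && (y == z)).

End Graphs.

From mathcomp Require Import all_boot all_order all_algebra zify.

Set Implicit Arguments.
Unset Strict Implicit.
Unset Printing Implicit Defensive.

(* Attach a leaf z at a vertex u of a connected graph H.  Every distance from
   z is one more than the corresponding distance from u, and the distances
   from u are unchanged apart from the new one, dist(u, z) = 1.  Hence
   t_{H^+}(z) = t_H(u) + |V(H)| and t_{H^+}(u) = t_H(u) + 1.  Applying this to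
   H = G and to H = G - v1, whose orders differ by one, gives both identities. *)

Section Balls.
Variable T : finType.
Implicit Types (W : {set T}) (f : rel T).

Lemma ball_sub W f x n : ball W f x n \subset W.
Proof.
elim: n => [|n IHn] /=; first exact: subsetIl.
by rewrite /grow subUset IHn; apply/subsetP => y; rewrite inE => /andP[].
Qed.

Lemma ball_mono W f x m n : m <= n -> ball W f x m \subset ball W f x n.
Proof.
move/subnK <-; elim: (n - m) => //= k IHk.
exact: subset_trans IHk (subsetUl _ _).
Qed.

Lemma mem_ball_center W f x n : x \in W -> x \in ball W f x n.
Proof.
by move=> xW; apply: (subsetP (ball_mono W f x (leq0n n))); rewrite !inE xW eqxx.
Qed.

Lemma ball_stable W f x j m :
  ball W f x j.+1 = ball W f x j -> j <= m -> ball W f x m = ball W f x j.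
Proof. by move=> fixj /subnK <-; elim: (m - j) => //= k ->. Qed.

(* Until the balls stabilise they grow by at least one vertex per step, and
   they all lie in W. *)
Lemma ball_stabilises W f x :
  exists2 j, j <= #|W| & ball W f x j.+1 = ball W f x j.
Proof.
have growth k : k <= #|ball W f x k| \/
                 exists2 j, j < k & ball W f x j.+1 = ball W f x j.
  elim: k => [|k [IHk | [j ltjk fixj]]]; first by left.
    have [fixk | growk] := eqVneq (ball W f x k.+1) (ball W f x k).
      by right; exists k.
    left; apply: leq_ltn_trans IHk (proper_card _).
    by rewrite properEneq eq_sym growk subsetUl.
  by right; exists j; first exact: ltnW.
have [| [j ltjW fixj]] := growth #|W|.+1; last by exists j.
by rewrite ltnNge subset_leq_card // ball_sub.
Qed.

Lemma ball_sub_card W f x n : ball W f x n \subset ball W f x #|W|.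
Proof.
have [j lejW fixj] := ball_stabilises W f x.
have [lenW | ltWn] := leqP n #|W|; first exact: ball_mono.
rewrite (ball_stable fixj (ltnW (leq_ltn_trans lejW ltWn))).
exact: ball_mono.
Qed.

(* dist only searches radii up to #|T|; by ball_sub_card that is far enough. *)
Lemma mem_ball_dist W f x y n : y \in ball W f x n ->
  forall m, (y \in ball W f x m) = (dist W f x y <= m).
Proof.
move=> yn; set P := fun k => y \in ball W f x k.
have hasP : has P (iota 0 #|T|.+1).
  apply/hasP; exists #|W|; last exact: subsetP (ball_sub_card W f x n) y yn.
  by rewrite mem_iota ltnS max_card.
have ltdist : dist W f x y < #|T|.+1.
  by rewrite -[X in _ < X](size_iota 0) -has_find.
have Pdist : P (dist W f x y) by have := nth_find 0 hasP; rewrite nth_iota.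
move=> m; apply/idP/idP => [ym | ledm].
  rewrite leqNgt; apply/negP => ltmd; have := before_find 0 ltmd.
  by rewrite nth_iota ?(ltn_trans ltmd ltdist) // add0n /P ym.
exact: subsetP (ball_mono W f x ledm) y Pdist.
Qed.

Lemma dist_threshold W f x y n :
  (forall m, (y \in ball W f x m) = (n <= m)) -> dist W f x y = n.
Proof.
move=> profile; have yn : y \in ball W f x n by rewrite profile.
have distE := mem_ball_dist yn.
by apply/eqP; rewrite eqn_leq -profile distE leqnn -distE profile leqnn.
Qed.

End Balls.

Section PendantVertex.
Variables (T : finType) (W : {set T}) (f g : rel T) (u z : T).
Hypotheses (zW : z \notin W) (uW : u \in W).
Hypothesis g_in : {in W &, g =2 f}.
Hypothesis g_leaf : {in W, forall y, g z y = (y == u)}.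
Hypothesis g_leaf' : {in W, forall x, g x z = (x == u)}.

Let neq_z y : y \in W -> (y == z) = false.
Proof. by move=> yW; apply: contraNF zW => /eqP <-. Qed.

Lemma grow_pendant (A : {set T}) : A \subset W ->
  grow (z |: W) g A = grow W f A :|: (if u \in A then [set z] else set0).
Proof.
move=> AW; apply/setP => y; rewrite /grow !inE.
have [-> | yz] := eqVneq y z.
  have -> : (z \in A) = false by apply: contraNF zW; apply: subsetP.
  have -> : [exists x in A, g x z] = (u \in A).
    apply/existsP/idP => [[x /andP[xA]] | uA].
      by rewrite g_leaf' ?(subsetP AW x xA) // => /eqP <-.
    by exists u; rewrite uA g_leaf' ?eqxx.
  by rewrite (negbTE zW); case: (u \in A); rewrite !inE ?eqxx.
have y_notin_leaf (b : bool) : (y \in (if b then [set z] else set0)) = false.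
  by case: b; rewrite !inE ?(negbTE yz).
rewrite y_notin_leaf orbF /=; congr (_ || _); have [yW | //] := boolP (y \in W).
rewrite /=; apply: eq_existsb => x; apply: andb_id2l => xA.
exact: g_in (subsetP AW x xA) yW.
Qed.

Lemma grow_pendant_leaf (A : {set T}) : A \subset W ->
  grow (z |: W) g (z |: A) = z |: (u |: grow W f A).
Proof.
move=> AW; apply/setP => y; rewrite /grow !inE.
have [-> | yz] := eqVneq y z; first by [].
rewrite /=; have [yW | yW] := boolP (y \in W); last first.
  have -> : (y \in A) = false by apply: contraNF yW; apply: subsetP.
  by rewrite /= orbF; apply/esym/eqP => yu; rewrite yu uW in yW.
have -> : [exists x in z |: A, g x y] = (y == u) || [exists x in A, f x y].
  apply/existsP/orP => [[x /andP[]] | [yu | /existsP[x /andP[xA fxy]]]].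
  - rewrite !inE => /orP[/eqP -> | xA] gxy; first by left; rewrite -g_leaf.
    by right; apply/existsP; exists x; rewrite xA -g_in ?(subsetP AW x xA).
  - by exists z; rewrite !inE eqxx g_leaf.
  - by exists x; rewrite !inE xA orbT g_in ?(subsetP AW x xA).
by rewrite orbCA.
Qed.

Lemma ball_pendant_root n :
  ball (z |: W) g u n = ball W f u n :|: (if n is 0 then set0 else [set z]).
Proof.
elim: n => [|n IHn].
  apply/setP => y; rewrite !inE orbF.
  by have [-> | _] := eqVneq y u; rewrite ?uW ?orbT ?andbF.
rewrite /= IHn; case: n {IHn} => [|n].
  by rewrite setU0 grow_pendant ?ball_sub // mem_ball_center.
have uB : [set u] \subset ball W f u n.+2 by rewrite sub1set mem_ball_center.
rewrite [ball W f u n.+1 :|: _]setUC grow_pendant_leaf ?ball_sub //.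
by rewrite (setUidPr uB) setUC.
Qed.

Lemma ball_pendant_leaf n : ball (z |: W) g z n.+1 = z |: ball W f u n.
Proof.
elim: n => [|n IHn].
  have ball0 : (z |: W) :&: [set z] = z |: set0.
    by rewrite setU0; apply/setIidPr; rewrite sub1set setU11.
  have grow0 : grow W f set0 = set0.
    apply/setP => y; rewrite /grow !inE.
    by apply/andP => -[_ /existsP[x]]; rewrite inE.
  rewrite /= ball0 grow_pendant_leaf ?sub0set // grow0 setU0.
  by rewrite (setIidPr _) // sub1set.
have uB : [set u] \subset ball W f u n.+1 by rewrite sub1set mem_ball_center.
change (grow (z |: W) g (ball (z |: W) g z n.+1) = z |: grow W f (ball W f u n)).
by rewrite IHn grow_pendant_leaf ?ball_sub // (setUidPr uB).
Qed.

Lemma dist_pendant_root y : y \in W -> dist (z |: W) g u y = dist W f u y.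
Proof.
move=> yW; apply: eq_find => n; rewrite ball_pendant_root inE.
by case: n => [|n]; rewrite !inE ?neq_z ?orbF.
Qed.

Lemma dist_pendant_root_leaf : dist (z |: W) g u z = 1.
Proof.
apply: dist_threshold => m; rewrite ball_pendant_root inE.
have -> : (z \in ball W f u m) = false by exact/contraNF/zW/subsetP/ball_sub.
by case: m => [|m]; rewrite !inE ?eqxx.
Qed.

Lemma dist_pendant_leaf_leaf : dist (z |: W) g z z = 0.
Proof. by apply: dist_threshold => m; rewrite mem_ball_center ?setU11. Qed.

Lemma dist_pendant_leaf y n : y \in ball W f u n ->
  dist (z |: W) g z y = (dist W f u y).+1.
Proof.
move=> yn; have yW := subsetP (ball_sub W f u n) y yn.
apply: dist_threshold => -[|m]; first by rewrite !inE neq_z ?andbF.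
by rewrite ball_pendant_leaf !inE neq_z // (mem_ball_dist yn).
Qed.

Lemma transmission_pendant_root :
  transmission (z |: W) g u = transmission W f u + 1.
Proof.
rewrite /transmission big_setU1 //= dist_pendant_root_leaf addnC.
by congr (_ + _); apply: eq_bigr => y; apply: dist_pendant_root.
Qed.

Lemma transmission_pendant_leaf : connected W f ->
  transmission (z |: W) g z = transmission W f u + #|W|.
Proof.
move=> connW; rewrite /transmission big_setU1 //= dist_pendant_leaf_leaf.
rewrite -sum1_card -big_split; apply: eq_bigr => y yW.
by have [n yn] := connW u y uW yW; rewrite (dist_pendant_leaf yn) -addn1.
Qed.

End PendantVertex.

Section PendantEdge.
Variables (T : finType) (V : {set T}) (e : rel T) (z u : T).
Hypothesis zV : z \notin V.

Let neq_z y : y \in V -> (y == z) = false.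
Proof. by move=> yV; apply: contraNF zV => /eqP <-. Qed.

Lemma pendant_edge_in : {in V &, pendant_edge V e z u =2 e}.
Proof.
move=> x y xV yV.
by rewrite /pendant_edge xV yV (neq_z xV) (neq_z yV) !andbT !andbF !orbF.
Qed.

Lemma pendant_edge_leafl :
  {in V, forall y, pendant_edge V e z u z y = (y == u)}.
Proof.
by move=> y yV; rewrite /pendant_edge (negbTE zV) (neq_z yV) eqxx !andbF orbF.
Qed.

Lemma pendant_edge_leafr :
  {in V, forall x, pendant_edge V e z u x z = (x == u)}.
Proof.
by move=> x xV; rewrite /pendant_edge (negbTE zV) (neq_z xV) eqxx !andbF andbT.
Qed.

Lemma transmission_pendant_edge (W : {set T}) :
  W \subset V -> u \in W -> connected W e ->
  transmission (z |: W) (pendant_edge V e z u) z = transmission W e u + #|W|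
  /\ transmission (z |: W) (pendant_edge V e z u) u = transmission W e u + 1.
Proof.
move=> /subsetP WV uW connW; have zW : z \notin W by apply: contra zV => /WV.
have g_in := sub_in2 WV pendant_edge_in.
have g_leaf := sub_in1 WV pendant_edge_leafl.
have g_leaf' := sub_in1 WV pendant_edge_leafr.
split; [exact: transmission_pendant_leaf | exact: transmission_pendant_root].
Qed.

End PendantEdge.

Local Open Scope ring_scope.

Theorem lemma1 (T : finType) (V : {set T}) (e : rel T) (v1 u z : T) :
  symmetric e -> irreflexive e ->
  connected V e -> v1 \in V ->
  connected (V :\ v1) e ->
  u \in V -> u != v1 -> z \notin V ->
  delta (z |: V) (pendant_edge V e z u) v1 z
    = delta (z |: V) (pendant_edge V e z u) v1 u + 1
  /\ delta (z |: V) (pendant_edge V e z u) v1 u + 1 = delta V e v1 u + 1.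
Proof.
move=> _ _ connV v1V connV1 uV uv1 zV.
have uV1 : u \in V :\ v1 by rewrite !inE uv1.
have [leafV rootV] := transmission_pendant_edge zV (subxx V) uV connV.
have [leafV1 rootV1] :=
  transmission_pendant_edge zV (subD1set V v1) uV1 connV1.
rewrite /delta; have -> : (z |: V) :\ v1 = z |: (V :\ v1).
  have v1z : (v1 == z) = false by apply: contraNF zV => /eqP <-.
  by apply/setP => x; rewrite !inE; case: eqVneq => [->|]; rewrite ?v1z.
rewrite leafV rootV leafV1 rootV1.
have := cardsD1 v1 V; rewrite v1V; lia.
Qed.
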